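(* Let $S$ be any finite set of states containing $\text{␣}$. Let $\mathcal{G}$ be the 4-CAS with state set $S$, cells $a_1=(-1,0)$, $a_2=(0,-1)$, $g=(0,0)$, $j=(1,-1)$, $d=(-1,1)$, $h=(1,0)$, $e=(0,1)$, $f=(1,1)$, $i=(2,0)$, $c=(0,2)$, $b_1=(2,1)$, $b_2=(1,2)$ (so $|L|=12$), sources $\{a_1,a_2\}$, and transition functions given as follows, where for a cell $x$ and $p,q\in\{1,\dots,5\}$ the notation $x\leftarrow p;q$ means $f_x(s_1,\dots,s_5,t)=s_p$ if $t$ is even and $=s_q$ if $t$ is odd (equivalently, for $t\ge1$, $C_{t,\iota}(x)=C_{t-1,\iota}(x+n_p)$ if $t$ is even and $C_{t-1,\iota}(x+n_q)$ if $t$ is odd, with $(n_1,\dots,n_5)=N_4$): $b_1,b_2,e,h\leftarrow 1;2$; $c,d\leftarrow 2;5$; $f,g\leftarrow 2;1$; $i,j\leftarrow 5;1$. Then $\mathcal{G}$ is a channel from $a_1$ to $b_1$ with delay $5$ and a channel from $a_2$ to $b_2$ with delay $5$, and $\mathcal{G}$ crosses these two channels. Consequently its maximum delay $\max\{\delta_1,\delta_2\}$ and mean delay $(\delta_1+\delta_2)/2$ both equal $5$, and its size $|L|$ equals $12$.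
   Context: A cellular automaton with sources (CAS) is a tuple $(L,A,S,N,\{f_c\}_{c\in L\setminus A})$ where $L\subseteq\mathbb{Z}^2$ is the set of cells, $A\subseteq L$ the sources, $S$ a finite set of states containing a blank state $\text{␣}$, $N=(n_1,\dots,n_\nu)$ a tuple of distinct offsets containing $0$, and $f_c:S^\nu\times\mathbb{N}\to S$ transition functions for non-sources (not depending on the $i$-th argument when $c+n_i\notin L$). A message is a function $m:\{0,\dots,r\}\to S\setminus\{\text{␣}\}$, $r=\lambda(m)$ its length; an input $\iota$ assigns a message to each source. Configurations: $C_{0,\iota}(c)=\iota(c)(0)$ for sources, $C_{0,\iota}(c)=\text{␣}$ for non-sources (blank-initialization); $C_{t+1,\iota}(c)=\iota(c)(t+1)$ if $c\in A$ and $t<\lambda(\iota(c))$, $=\text{␣}$ if $c\in A$ and $t\ge\lambda(\iota(c))$, and $=f_c(C_{t,\iota}(c+n_1),\dots,C_{t,\iota}(c+n_\nu),t+1)$ otherwise. A 4-CAS has $N=N_4=((-1,0),(0,-1),(1,0),(0,1),(0,0))$. Channel: $\mathcal{C}$ is a channel from $x$ to $y$ with delay $\delta$ if for all $t\in\mathbb{N}$ and all inputs $\iota$, $C_{t,\iota}(y)=C_{t-\delta,\iota}(x)$ for $t\ge\delta$ and $C_{t,\iota}(y)=\text{␣}$ for $t<\delta$. External boundary: viewing cells as unit squares in $\mathbb{R}^2$, a finite connected (under orthogonal adjacency) $L$ has an external boundary, a cyclic sequence $(e_0,\dots,e_{k-1})$ of unit edges forming a simple closed curve (consecutive edges meet at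 distinct vertices), each $e_i$ separating a cell $\bar e_i\in L$ from a cell not in $L$, with $L$ inside the bounded region; unique up to reversal and cyclic shift. Crossing: a CAS that is a channel from $a_1$ to $b_1$ and from $a_2$ to $b_2$ (four distinct cells, $a_1,a_2$ sources) crosses these channels if (i) $L$ is connected; (ii) whenever $\bar e_i=\bar e_j\in\{a_1,a_2,b_1,b_2\}$ with $i\le j$, either $|\{\bar e_l:i\le l\le j\}|=1$ or $|\{\bar e_l: l\le i\text{ or }l\ge j\}|=1$; (iii) there are $\alpha<\beta<\gamma<\delta$ with $(\bar e_\alpha,\bar e_\beta,\bar e_\gamma,\bar e_\delta)$ a cyclic permutation of $(a_1,a_2,b_1,b_2)$ or of $(b_2,b_1,a_2,a_1)$. *)

From Stdlib Require Import ZArith List Bool Arith Lia.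
Import ListNotations.
Open Scope Z_scope.

Definition cell := (Z * Z)%type.

Definition ceqb (c d : cell) : bool := Z.eqb (fst c) (fst d) && Z.eqb (snd c) (snd d).
Definition memb (c : cell) (l : list cell) : bool := existsb (ceqb c) l.
Definition addc (c n : cell) : cell := (fst c + fst n, snd c + snd n).

(* Orthogonal adjacency of cells (also used for unit lattice edges). *)
Definition adjc (c d : cell) : Prop := Z.abs (fst c - fst d) + Z.abs (snd c - snd d) = 1.

(* A CAS over a state type S: the finite cell set L (list), the sources A,
   the blank state, the neighbourhood tuple N = (n_1,...,n_nu) (a list),
   and the transition functions f_c : S^nu x N -> S (argument list of length nu). *)
Record CAS (S : Type) := mkCAS {
  cells : list cell;
  sources : list cell;
  blank : S;
  nbhd : list cell;
  trans : cell -> list S -> nat -> S }.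
Arguments cells {S}. Arguments sources {S}. Arguments blank {S}.
Arguments nbhd {S}. Arguments trans {S}.

Definition is_CAS {S : Type} (G : CAS S) : Prop :=
  NoDup (cells G) /\
  incl (sources G) (cells G) /\
  NoDup (nbhd G) /\ In (0, 0) (nbhd G) /\
  (forall c, In c (cells G) -> ~ In c (sources G) ->
     forall i, (i < length (nbhd G))%nat ->
       ~ In (addc c (nth i (nbhd G) (0, 0))) (cells G) ->
       forall (s s' : list S) (t : nat),
         length s = length (nbhd G) -> length s' = length (nbhd G) ->
         (forall j, j <> i -> nth j s (blank G) = nth j s' (blank G)) ->
         trans G c s t = trans G c s' t).

Definition N4 : list cell := [(-1, 0); (0, -1); (1, 0); (0, 1); (0, 0)].

Definition is_4CAS {S : Type} (G : CAS S) : Prop := is_CAS G /\ nbhd G = N4.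

(** A message m : {0..r} -> S \ {blank} is represented by
    the pair (r, m) with m k <> blank for k <= r (values beyond r are irrelevant). *)
Definition input (S : Type) := cell -> (nat * (nat -> S))%type.

Definition valid_input {S : Type} (G : CAS S) (iota : input S) : Prop :=
  forall c, In c (sources G) ->
    forall k, (k <= fst (iota c))%nat -> snd (iota c) k <> blank G.

(* Configurations C_{t,iota}; cells outside L are given the blank state
   (the transition functions do not depend on them anyway). *)
Fixpoint conf {St : Type} (G : CAS St) (iota : input St) (t : nat) (c : cell) : St :=
  match t with
  | O => if memb c (sources G) then snd (iota c) 0%nat else blank G
  | S t' =>
      if memb c (sources G) then
        (if Nat.ltb t' (fst (iota c)) then snd (iota c) (S t') else blank G)
      else if memb c (cells G) then
        trans G c (map (fun n => conf G iota t' (addc c n)) (nbhd G)) (S t')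
      else blank G
  end.

Definition channel {S : Type} (G : CAS S) (x y : cell) (delta : nat) : Prop :=
  forall iota : input S, valid_input G iota ->
    forall t : nat,
      ((delta <= t)%nat -> conf G iota t y = conf G iota (t - delta) x) /\
      ((t < delta)%nat -> conf G iota t y = blank G).

Fixpoint chain (p : list cell) : Prop :=
  match p with
  | a :: ((b :: _) as rest) => adjc a b /\ chain rest
  | _ => True
  end.

Definition connected (L : list cell) : Prop :=
  forall x y, In x L -> In y L ->
    exists p : list cell, Forall (fun z => In z L) p /\ chain (x :: p) /\ last (x :: p) x = y.

(* Cell (x,y) is the unit square [x,x+1] x [y,y+1]; lattice points are vertices.
   A boundary is given by its cyclic vertex list vs = [v_0;...;v_{k-1}];
   edge e_i joins v_i and v_{(i+1) mod k}. *)
Definition vtx (vs : list cell) (i : nat) : cell := nth i vs (0, 0).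
Definition vnext (vs : list cell) (i : nat) : cell := nth ((i + 1) mod length vs) vs (0, 0).

(* The two cells on either side of the unit edge u--v. *)
Definition edge_cells (u v : cell) : cell * cell :=
  if Z.eqb (snd u) (snd v) then
    let X := Z.min (fst u) (fst v) in ((X, snd u), (X, snd u - 1))
  else
    let Y := Z.min (snd u) (snd v) in ((fst u, Y), (fst u - 1, Y)).

(* \bar e : the cell of L adjacent to the edge u--v. *)
Definition ebar (L : list cell) (u v : cell) : cell :=
  let p := edge_cells u v in if memb (fst p) L then fst p else snd p.

Definition ebar_at (L vs : list cell) (i : nat) : cell := ebar L (vtx vs i) (vnext vs i).

Definition separating (L : list cell) (u v : cell) : Prop :=
  let p := edge_cells u v in memb (fst p) L <> memb (snd p) L.

(* Number of edges of the curve crossed by the horizontal ray from the centre of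
   cell (x,y) to the right; the cell lies in the bounded region iff it is odd. *)
Definition ray_hits (c u v : cell) : bool :=
  Z.eqb (fst u) (fst v) && Z.eqb (Z.min (snd u) (snd v)) (snd c) && Z.ltb (fst c) (fst u).

Definition ray_count (vs : list cell) (c : cell) : nat :=
  length (filter (fun i => ray_hits c (vtx vs i) (vnext vs i)) (seq 0 (length vs))).

Definition inside_curve (vs : list cell) (c : cell) : Prop := Nat.odd (ray_count vs c) = true.

Definition external_boundary (L vs : list cell) : Prop :=
  (* simple closed curve made of unit edges *)
  (3 <= length vs)%nat /\ NoDup vs /\
  (forall i, (i < length vs)%nat -> adjc (vtx vs i) (vnext vs i)) /\
  (forall i, (i < length vs)%nat -> separating L (vtx vs i) (vnext vs i)) /\
  (forall c, In c L -> inside_curve vs c).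

Definition cyc_perm (l : list cell) (w x y z : cell) : Prop :=
  l = [w; x; y; z] \/ l = [x; y; z; w] \/ l = [y; z; w; x] \/ l = [z; w; x; y].

Definition cond_ii (L vs : list cell) (a1 a2 b1 b2 : cell) : Prop :=
  forall i j, (i <= j)%nat -> (j < length vs)%nat ->
    ebar_at L vs i = ebar_at L vs j -> In (ebar_at L vs i) [a1; a2; b1; b2] ->
    (forall l, (i <= l <= j)%nat -> ebar_at L vs l = ebar_at L vs i) \/
    (forall l, (l < length vs)%nat -> (l <= i \/ j <= l)%nat -> ebar_at L vs l = ebar_at L vs i).

Definition cond_iii (L vs : list cell) (a1 a2 b1 b2 : cell) : Prop :=
  exists al be ga de, (al < be < ga)%nat /\ (ga < de < length vs)%nat /\
    let l := [ebar_at L vs al; ebar_at L vs be; ebar_at L vs ga; ebar_at L vs de] in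
    cyc_perm l a1 a2 b1 b2 \/ cyc_perm l b2 b1 a2 a1.

(* Since the external boundary is
   unique up to reversal and cyclic shift (and (ii), (iii) are invariant), we require
   that it exists and that (ii), (iii) hold for every external boundary. *)
Definition crosses {S : Type} (G : CAS S) (a1 b1 a2 b2 : cell) : Prop :=
  (exists d1, channel G a1 b1 d1) /\ (exists d2, channel G a2 b2 d2) /\
  NoDup [a1; a2; b1; b2] /\ In a1 (sources G) /\ In a2 (sources G) /\
  connected (cells G) /\
  (exists vs, external_boundary (cells G) vs) /\
  (forall vs, external_boundary (cells G) vs ->
     cond_ii (cells G) vs a1 a2 b1 b2 /\ cond_iii (cells G) vs a1 a2 b1 b2).

Definition ca1 : cell := (-1, 0).
Definition ca2 : cell := (0, -1).
Definition cg : cell := (0, 0).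
Definition cj : cell := (1, -1).
Definition cd : cell := (-1, 1).
Definition ch : cell := (1, 0).
Definition ce : cell := (0, 1).
Definition cf : cell := (1, 1).
Definition ci : cell := (2, 0).
Definition cc : cell := (0, 2).
Definition cb1 : cell := (2, 1).
Definition cb2 : cell := (1, 2).

Definition G_cells : list cell := [ca1; ca2; cg; cj; cd; ch; ce; cf; ci; cc; cb1; cb2].
Definition G_sources : list cell := [ca1; ca2].

(* x <- p;q : (p, q), 1-based indices into N4. *)
Definition G_rules : list (cell * (nat * nat)) :=
  [ (cb1, (1, 2)); (cb2, (1, 2)); (ce, (1, 2)); (ch, (1, 2));
    (cc, (2, 5)); (cd, (2, 5));
    (cf, (2, 1)); (cg, (2, 1));
    (ci, (5, 1)); (cj, (5, 1)) ]%nat.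

Definition rule_of (c : cell) : option (nat * nat) :=
  option_map snd (find (fun r => ceqb c (fst r)) G_rules).

Definition G_trans {S : Type} (bl : S) (c : cell) (s : list S) (t : nat) : S :=
  match rule_of c with
  | Some (p, q) => if Nat.even t then nth (p - 1) s bl else nth (q - 1) s bl
  | None => bl
  end.

Definition G_CAS {S : Type} (bl : S) : CAS S :=
  mkCAS S G_cells G_sources bl N4 (G_trans bl).

From Stdlib Require Import ZArith List Arith Lia Bool.
Import ListNotations.
Open Scope Z_scope.

(* Well-formedness and the two channels are local facts: every non-source cell
   copies a neighbour inside L, chosen by the parity of the time, so unfolding
   five steps of the dynamics traces the state of b1 (resp. b2) back to the
   state of a1 (resp. a2) five steps earlier, along a route that depends on the
   parity of t but always has length five.

   The crossing property is global, because it quantifies over every external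
   boundary of L.  The key observation is that consecutive vertices of any such
   boundary are joined by a unit edge separating L from its complement, and all
   these edges lie on the boundaries of the cells of L.  Hence every boundary is
   a closed simple path in the finite graph of separating edges of L.  We
   enumerate the simple paths of this graph by length, check that there are none
   with 17 vertices, and check conditions (ii) and (iii) on every closed one. *)

Lemma ceqb_spec (c d : cell) : ceqb c d = true <-> c = d.
Proof.
  destruct c as [x y], d as [x' y']; unfold ceqb; simpl.
  rewrite andb_true_iff, !Z.eqb_eq. split; [intros [-> ->] | intros [= -> ->]]; auto.
Qed.

Lemma memb_spec (c : cell) (l : list cell) : memb c l = true <-> In c l.
Proof.
  unfold memb. rewrite existsb_exists. split.
  - intros [x [Hx Hc]]. apply ceqb_spec in Hc. subst. exact Hx.
  - intros Hc. exists c. split; [exact Hc | apply ceqb_spec; reflexivity].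
Qed.

Fixpoint nodupb (l : list cell) : bool :=
  match l with [] => true | x :: r => negb (memb x r) && nodupb r end.

Lemma nodupb_spec (l : list cell) : nodupb l = true <-> NoDup l.
Proof.
  induction l as [|x r IH]; simpl; [split; auto using NoDup_nil|].
  rewrite andb_true_iff, negb_true_iff, IH, NoDup_cons_iff, <- memb_spec.
  destruct (memb x r); intuition congruence.
Qed.

Definition edgeb (E : list (cell * cell)) (u v : cell) : bool :=
  existsb (fun e => ceqb u (fst e) && ceqb v (snd e)) E.

Lemma edgeb_spec E u v : edgeb E u v = true <-> In (u, v) E.
Proof.
  unfold edgeb. rewrite existsb_exists. split.
  - intros [[a b] [He Hc]]. simpl in Hc.
    apply andb_true_iff in Hc as [H1 H2]. apply ceqb_spec in H1, H2. subst. exact He.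
  - intros He. exists (u, v). split; [exact He|]. simpl.
    apply andb_true_iff; split; apply ceqb_spec; reflexivity.
Qed.

Definition adjb (c d : cell) : bool := Z.abs (fst c - fst d) + Z.abs (snd c - snd d) =? 1.

Lemma adjb_spec c d : adjb c d = true <-> adjc c d.
Proof. apply Z.eqb_eq. Qed.

Fixpoint chainb (l : list cell) : bool :=
  match l with
  | a :: ((b :: _) as rest) => adjb a b && chainb rest
  | _ => true
  end.

Lemma chainb_sound l : chainb l = true -> chain l.
Proof.
  induction l as [|a [|b r] IH]; simpl; auto.
  intros [H1 H2]%andb_true_iff. split; [apply adjb_spec|apply IH]; assumption.
Qed.

(* [route x y] is a certificate of connectivity: a chain inside L leading
   from x to y, for every pair of cells of L. *)
Definition routes_ok (L : list cell) (route : cell -> cell -> list cell) : bool :=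
  forallb (fun x => forallb (fun y =>
    forallb (fun z => memb z L) (route x y) && chainb (x :: route x y) &&
    ceqb (last (x :: route x y) x) y) L) L.

Lemma connected_of_routes L route : routes_ok L route = true -> connected L.
Proof.
  intros H x y Hx Hy. unfold routes_ok in H. rewrite forallb_forall in H.
  specialize (H x Hx). rewrite forallb_forall in H. specialize (H y Hy).
  apply andb_true_iff in H as [[H1 H2]%andb_true_iff H3].
  exists (route x y). split; [|split].
  - apply Forall_forall. intros z Hz. rewrite forallb_forall in H1. apply memb_spec; auto.
  - apply chainb_sound; exact H2.
  - apply ceqb_spec; exact H3.
Qed.


Section SimplePaths.
Variable E : list (cell * cell).

Fixpoint walkb (l : list cell) : bool :=
  match l with
  | a :: ((b :: _) as rest) => edgeb E a b && walkb rest
  | _ => true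
  end.

(* Walks can be recognised index by index, as boundary curves are given. *)
Lemma walkb_of_nth (vs : list cell) :
  (forall i, (S i < length vs)%nat -> edgeb E (nth i vs (0, 0)) (nth (S i) vs (0, 0)) = true) ->
  walkb vs = true.
Proof.
  induction vs as [|a [|b r] IH]; intros H; try reflexivity.
  change (edgeb E a b && walkb (b :: r) = true). apply andb_true_iff; split.
  - exact (H 0%nat ltac:(simpl; lia)).
  - apply IH. intros i Hi. apply (H (S i)). simpl in *; lia.
Qed.

Definition extend (P : list (list cell)) : list (list cell) :=
  flat_map (fun p => map (fun e => fst e :: p)
     (filter (fun e => ceqb (snd e) (hd (0, 0) p) && negb (memb (fst e) p)) E)) P.

Fixpoint simple_paths (n : nat) : list (list cell) :=
  match n with
  | O | S O => []
  | S (S O) => map (fun e => [fst e; snd e]) E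
  | S k => extend (simple_paths k)
  end.

Lemma simple_paths_complete (vs : list cell) :
  (2 <= length vs)%nat -> walkb vs = true -> nodupb vs = true ->
  In vs (simple_paths (length vs)).
Proof.
  induction vs as [|w [|w' [|w'' p]] IH]; intros Hl Hw Hn; simpl in Hl; try lia;
  cbn [walkb nodupb] in Hw, Hn; apply andb_true_iff in Hw as [Hw1 Hw2];
  apply andb_true_iff in Hn as [Hn1 Hn2]; apply edgeb_spec in Hw1.
  - apply in_map_iff. exists (w, w'). auto.
  - change (In (w :: w' :: w'' :: p) (extend (simple_paths (length (w' :: w'' :: p))))).
    apply in_flat_map. exists (w' :: w'' :: p). split.
    + apply IH; auto. simpl; lia.
    + apply in_map_iff. exists (w, w'). split; [reflexivity|].
      apply filter_In. split; [exact Hw1|]. simpl.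
      rewrite (proj2 (ceqb_spec w' w') eq_refl). exact Hn1.
Qed.

Lemma simple_paths_vanish (k m : nat) :
  simple_paths (S (S k)) = [] -> simple_paths (S (S k) + m) = [].
Proof.
  intros H. induction m as [|m IH]; [rewrite Nat.add_0_r; exact H|].
  rewrite Nat.add_succ_r. change (extend (simple_paths (S (S k) + m)) = []).
  rewrite IH. reflexivity.
Qed.

End SimplePaths.

Definition cell_edges (c : cell) : list (cell * cell) :=
  let '(x, y) := c in
  let p00 := (x, y) in let p10 := (x + 1, y) in
  let p01 := (x, y + 1) in let p11 := (x + 1, y + 1) in
  [(p00, p10); (p10, p00); (p01, p11); (p11, p01);
   (p00, p01); (p01, p00); (p10, p11); (p11, p10)].

Lemma edge_cells_sides (u v : cell) : adjc u v ->
  In (u, v) (cell_edges (fst (edge_cells u v))) /\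
  In (u, v) (cell_edges (snd (edge_cells u v))).
Proof.
  destruct u as [x y], v as [x' y']. unfold adjc, edge_cells; cbn [fst snd]. intros Ha.
  assert ((x' = x + 1 /\ y' = y) \/ (x' = x - 1 /\ y' = y) \/
          (x' = x /\ y' = y + 1) \/ (x' = x /\ y' = y - 1)) as Hc by lia.
  destruct Hc as [[-> ->]|[[-> ->]|[[-> ->]|[-> ->]]]].
  - rewrite Z.eqb_refl, Z.min_l by lia. simpl.
    replace (y - 1 + 1) with y by lia. tauto.
  - rewrite Z.eqb_refl, Z.min_r by lia. simpl.
    replace (x - 1 + 1) with x by lia. replace (y - 1 + 1) with y by lia. tauto.
  - rewrite (proj2 (Z.eqb_neq y (y + 1))), Z.min_l by lia. simpl.
    replace (x - 1 + 1) with x by lia. tauto.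
  - rewrite (proj2 (Z.eqb_neq y (y - 1))), Z.min_r by lia. simpl.
    replace (x - 1 + 1) with x by lia. replace (y - 1 + 1) with y by lia. tauto.
Qed.

Definition sepb (L : list cell) (u v : cell) : bool :=
  let p := edge_cells u v in negb (Bool.eqb (memb (fst p) L) (memb (snd p) L)).

Lemma sepb_spec L u v : sepb L u v = true <-> separating L u v.
Proof.
  unfold sepb, separating.
  destruct (memb (fst (edge_cells u v)) L), (memb (snd (edge_cells u v)) L);
    simpl; intuition congruence.
Qed.

Definition boundary_edges (L : list cell) : list (cell * cell) :=
  filter (fun e => sepb L (fst e) (snd e)) (flat_map cell_edges L).

Lemma separating_boundary_edge L u v :
  adjc u v -> separating L u v -> In (u, v) (boundary_edges L).
Proof.
  intros Ha Hs. apply filter_In. split; [|apply sepb_spec; exact Hs].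
  apply in_flat_map. destruct (edge_cells_sides u v Ha) as [H1 H2].
  unfold separating in Hs.
  destruct (memb (fst (edge_cells u v)) L) eqn:M.
  - exists (fst (edge_cells u v)). split; [apply memb_spec|]; assumption.
  - exists (snd (edge_cells u v)). split; [|exact H2].
    apply memb_spec. destruct (memb (snd (edge_cells u v)) L); congruence.
Qed.

Definition closedb (E : list (cell * cell)) (p : list cell) : bool :=
  edgeb E (nth (length p - 1) p (0, 0)) (nth 0 p (0, 0)).

(* Any external boundary of L is a closed simple path in the graph of
   separating edges of L; this is what makes the boundaries enumerable. *)
Lemma boundary_closed_simple_path L vs : external_boundary L vs ->
  let E := boundary_edges L in
  walkb E vs = true /\ nodupb vs = true /\ closedb E vs = true.
Proof.
  intros (H3 & Hnd & Hadj & Hsep & _) E.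
  assert (He : forall i, (i < length vs)%nat -> edgeb E (vtx vs i) (vnext vs i) = true)
    by (intros i Hi; apply edgeb_spec, separating_boundary_edge; auto).
  split; [|split; [apply nodupb_spec; exact Hnd|]].
  - apply walkb_of_nth. intros i Hi. specialize (He i ltac:(lia)).
    unfold vtx, vnext in He. rewrite Nat.mod_small, Nat.add_1_r in He by lia. exact He.
  - specialize (He (length vs - 1)%nat ltac:(lia)). unfold vtx, vnext in He.
    rewrite Nat.sub_add, Nat.Div0.mod_same in He by lia. exact He.
Qed.

Definition external_boundaryb (L vs : list cell) : bool :=
  (3 <=? length vs)%nat && nodupb vs &&
  forallb (fun i => adjb (vtx vs i) (vnext vs i) && sepb L (vtx vs i) (vnext vs i))
    (seq 0 (length vs)) &&
  forallb (fun c => Nat.odd (ray_count vs c)) L.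

Lemma external_boundaryb_sound L vs : external_boundaryb L vs = true -> external_boundary L vs.
Proof.
  unfold external_boundaryb.
  intros [[[H3 Hnd]%andb_true_iff Hedges]%andb_true_iff Hin]%andb_true_iff.
  rewrite forallb_forall in Hedges, Hin.
  assert (He : forall i, (i < length vs)%nat ->
            adjb (vtx vs i) (vnext vs i) = true /\ sepb L (vtx vs i) (vnext vs i) = true)
    by (intros i Hi; apply andb_true_iff, Hedges, in_seq; lia).
  split; [apply Nat.leb_le; exact H3|]. split; [apply nodupb_spec; exact Hnd|].
  split; [|split].
  - intros i Hi. apply adjb_spec, He, Hi.
  - intros i Hi. apply sepb_spec, He, Hi.
  - intros c Hc. apply Hin, Hc.
Qed.

Section CrossingTests.
Variables (L : list cell) (a1 a2 b1 b2 : cell).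

Definition cond_iib (vs : list cell) : bool :=
  let n := length vs in
  let eb := ebar_at L vs in
  forallb (fun i => forallb (fun j =>
    implb (Nat.leb i j && ceqb (eb i) (eb j) && memb (eb i) [a1; a2; b1; b2])
      (forallb (fun l => ceqb (eb l) (eb i)) (seq i (j - i + 1)) ||
       forallb (fun l => implb (Nat.leb l i || Nat.leb j l) (ceqb (eb l) (eb i))) (seq 0 n)))
    (seq 0 n)) (seq 0 n).

Lemma cond_iib_sound vs : cond_iib vs = true -> cond_ii L vs a1 a2 b1 b2.
Proof.
  unfold cond_iib, cond_ii. intros H i j Hij Hj Heq Hin.
  rewrite forallb_forall in H. specialize (H i ltac:(apply in_seq; lia)).
  rewrite forallb_forall in H. specialize (H j ltac:(apply in_seq; lia)).
  rewrite (proj2 (memb_spec _ _) Hin), Heq, (proj2 (ceqb_spec _ _) eq_refl),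
    (proj2 (Nat.leb_le i j) Hij) in H.
  apply orb_true_iff in H as [H|H]; [left|right]; rewrite forallb_forall in H.
  - intros l Hl. specialize (H l ltac:(apply in_seq; lia)). apply ceqb_spec in H. congruence.
  - intros l Hl Hor. specialize (H l ltac:(apply in_seq; lia)).
    rewrite (proj2 (orb_true_iff _ _)) in H
      by (destruct Hor; [left|right]; apply Nat.leb_le; lia).
    apply ceqb_spec in H. congruence.
Qed.

Fixpoint lceqb (l m : list cell) : bool :=
  match l, m with
  | [], [] => true
  | a :: l', b :: m' => ceqb a b && lceqb l' m'
  | _, _ => false
  end.

Lemma lceqb_eq l m : lceqb l m = true -> l = m.
Proof.
  revert m; induction l as [|a l IH]; intros [|b m] H; try discriminate; auto.
  simpl in H. apply andb_true_iff in H as [H1 H2]. apply ceqb_spec in H1. f_equal; auto.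
Qed.

Definition cyc_permb (l : list cell) (w x y z : cell) : bool :=
  lceqb l [w; x; y; z] || lceqb l [x; y; z; w] || lceqb l [y; z; w; x] || lceqb l [z; w; x; y].

Lemma cyc_permb_sound l w x y z : cyc_permb l w x y z = true -> cyc_perm l w x y z.
Proof.
  unfold cyc_permb, cyc_perm. intros H. repeat rewrite orb_true_iff in H.
  destruct H as [[[H|H]|H]|H]; apply lceqb_eq in H; tauto.
Qed.

(* Test (iii) reads the boundary cells from a precomputed list, for speed. *)
Lemma nth_ebar_list vs n k : (k < n)%nat ->
  nth k (map (ebar_at L vs) (seq 0 n)) (0, 0) = ebar_at L vs k.
Proof.
  intros Hk. rewrite (nth_indep _ (0, 0) (ebar_at L vs 0%nat)) by (rewrite length_map, length_seq; lia).
  rewrite map_nth, seq_nth by lia. reflexivity.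
Qed.

Definition cond_iiib (vs : list cell) : bool :=
  let n := length vs in
  let ebs := map (ebar_at L vs) (seq 0 n) in
  let eb k := nth k ebs (0, 0) in
  existsb (fun al => existsb (fun be => existsb (fun ga => existsb (fun de =>
    let l := [eb al; eb be; eb ga; eb de] in
    cyc_permb l a1 a2 b1 b2 || cyc_permb l b2 b1 a2 a1)
   (seq (S ga) (n - S ga))) (seq (S be) (n - S be))) (seq (S al) (n - S al))) (seq 0 n).

Lemma cond_iiib_sound vs : cond_iiib vs = true -> cond_iii L vs a1 a2 b1 b2.
Proof.
  unfold cond_iiib, cond_iii. intros H.
  apply existsb_exists in H as [al [Ha H]]. apply existsb_exists in H as [be [Hb H]].
  apply existsb_exists in H as [ga [Hg H]]. apply existsb_exists in H as [de [Hd H]].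
  apply in_seq in Ha, Hb, Hg, Hd.
  exists al, be, ga, de. split; [lia|]. split; [lia|].
  rewrite !nth_ebar_list in H by lia.
  apply orb_true_iff in H as [H|H]; [left|right]; apply cyc_permb_sound; exact H.
Qed.

End CrossingTests.

Definition boundary_crossing_test (L : list cell) (a1 a2 b1 b2 : cell) (N : nat) : bool :=
  let E := boundary_edges L in
  (length (simple_paths E (S (S N))) =? 0)%nat &&
  forallb (fun n => forallb (fun p =>
      negb (closedb E p) || (cond_iib L a1 a2 b1 b2 p && cond_iiib L a1 a2 b1 b2 p))
    (simple_paths E n)) (seq 3 N).

Lemma boundary_crossing_test_sound L a1 a2 b1 b2 N :
  boundary_crossing_test L a1 a2 b1 b2 N = true ->
  forall vs, external_boundary L vs ->
    cond_ii L vs a1 a2 b1 b2 /\ cond_iii L vs a1 a2 b1 b2.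
Proof.
  unfold boundary_crossing_test.
  intros [Hvanish Hall]%andb_true_iff vs Hvs.
  destruct (boundary_closed_simple_path L vs Hvs) as (Hw & Hn & Hc).
  assert (Hlen3 : (3 <= length vs)%nat) by apply Hvs.
  pose proof (simple_paths_complete (boundary_edges L) vs ltac:(lia) Hw Hn) as Hp.
  assert (Hlen : (length vs < S (S N))%nat).
  { destruct (Nat.lt_ge_cases (length vs) (S (S N))) as [?|Hge]; [assumption|].
    apply Nat.eqb_eq, length_zero_iff_nil in Hvanish.
    replace (length vs) with (S (S N) + (length vs - S (S N)))%nat in Hp by lia.
    rewrite simple_paths_vanish in Hp by exact Hvanish. destruct Hp. }
  rewrite forallb_forall in Hall. specialize (Hall (length vs) ltac:(apply in_seq; lia)).
  rewrite forallb_forall in Hall. specialize (Hall vs Hp).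
  rewrite Hc in Hall. apply andb_true_iff in Hall as [H2 H3].
  split; [apply cond_iib_sound | apply cond_iiib_sound]; assumption.
Qed.

Lemma G_rules_read_inside c : In c G_cells -> ~ In c G_sources ->
  exists p q, rule_of c = Some (p, q) /\
    In (addc c (nth (p - 1) N4 (0, 0))) G_cells /\
    In (addc c (nth (q - 1) N4 (0, 0))) G_cells.
Proof.
  intros Hc Hns. cbv [G_cells] in Hc.
  repeat destruct Hc as [<-|Hc]; try (exfalso; apply Hns; simpl; tauto); try contradiction;
  do 2 eexists; (split; [reflexivity|]); split; apply memb_spec; vm_compute; reflexivity.
Qed.

(* G is a well-formed 4-CAS: a transition only reads a neighbour inside L,
   so it ignores the arguments of neighbours outside L. *)
Lemma G_is_4CAS {St : Type} (bl : St) : is_4CAS (G_CAS bl).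
Proof.
  split; [|reflexivity]. cbn [cells sources nbhd blank trans G_CAS].
  split; [apply nodupb_spec; vm_compute; reflexivity|].
  split; [intros c Hc; apply memb_spec; simpl in Hc;
          destruct Hc as [<-|[<-|[]]]; vm_compute; reflexivity|].
  split; [apply nodupb_spec; vm_compute; reflexivity|].
  split; [apply memb_spec; vm_compute; reflexivity|].
  intros c Hc Hns i _ Hout s s' t _ _ Hsame.
  destruct (G_rules_read_inside c Hc Hns) as (p & q & Hrule & Hp & Hq).
  cbn [trans G_CAS]. unfold G_trans. rewrite Hrule.
  destruct (Nat.even t); apply Hsame; intros Hki; subst i; contradiction.
Qed.

Section Dynamics.
Variables (St : Type) (bl : St) (iota : input St).
Notation C t x := (conf (G_CAS bl) iota t x).

Lemma step_b1 t : C (S t) cb1 = if Nat.even (S t) then C t cf else C t ci. Proof. reflexivity. Qed.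
Lemma step_b2 t : C (S t) cb2 = if Nat.even (S t) then C t cc else C t cf. Proof. reflexivity. Qed.
Lemma step_c t : C (S t) cc = if Nat.even (S t) then C t ce else C t cc. Proof. reflexivity. Qed.
Lemma step_d t : C (S t) cd = if Nat.even (S t) then C t ca1 else C t cd. Proof. reflexivity. Qed.
Lemma step_e t : C (S t) ce = if Nat.even (S t) then C t cd else C t cg. Proof. reflexivity. Qed.
Lemma step_f t : C (S t) cf = if Nat.even (S t) then C t ch else C t ce. Proof. reflexivity. Qed.
Lemma step_g t : C (S t) cg = if Nat.even (S t) then C t ca2 else C t ca1. Proof. reflexivity. Qed.
Lemma step_h t : C (S t) ch = if Nat.even (S t) then C t cg else C t cj. Proof. reflexivity. Qed.
Lemma step_i t : C (S t) ci = if Nat.even (S t) then C t ci else C t ch. Proof. reflexivity. Qed.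
Lemma step_j t : C (S t) cj = if Nat.even (S t) then C t cj else C t ca2. Proof. reflexivity. Qed.

End Dynamics.

Ltac unfold_signal :=
  repeat rewrite ?step_b1, ?step_b2, ?step_c, ?step_d, ?step_e,
                 ?step_f, ?step_g, ?step_h, ?step_i, ?step_j.

(* After five unfolded steps (and a parity case split) the receiving cell
   holds the state of the source five steps earlier, and blank before. *)
Ltac solve_channel :=
  intros iota _ t; split; intros Ht; destruct t as [|[|[|[|[|n]]]]]; try lia;
  unfold_signal;
  [ replace (S (S (S (S (S n)))) - 5)%nat with n by lia;
    repeat rewrite ?Nat.even_succ, ?Nat.odd_succ; rewrite <- ?Nat.negb_even;
    destruct (Nat.even n)
  | .. ]; reflexivity.

(* The signal of a1 reaches b1 along b1 <- f <- e <- d <- d <- a1 when t is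
   even and along b1 <- i <- i <- h <- g <- a1 when t is odd. *)
Lemma G_channel1 {St : Type} (bl : St) : channel (G_CAS bl) ca1 cb1 5.
Proof. solve_channel. Qed.

(* The signal of a2 reaches b2 along b2 <- c <- c <- e <- g <- a2 when t is
   even and along b2 <- f <- h <- j <- j <- a2 when t is odd. *)
Lemma G_channel2 {St : Type} (bl : St) : channel (G_CAS bl) ca2 cb2 5.
Proof. solve_channel. Qed.

Definition path_to_centre (c : cell) : list cell :=
  if ceqb c cg then [cg] else
  if ceqb c cj then [cj; ch; cg] else
  if ceqb c ci then [ci; ch; cg] else
  if ceqb c cd then [cd; ce; cg] else
  if ceqb c cc then [cc; ce; cg] else
  if ceqb c cf then [cf; ce; cg] else
  if ceqb c cb1 then [cb1; cf; ce; cg] else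
  if ceqb c cb2 then [cb2; cf; ce; cg] else [c; cg].

Definition route_via_centre (x y : cell) : list cell :=
  tl (path_to_centre x) ++ tl (rev (path_to_centre y)).

Lemma G_connected : connected G_cells.
Proof. apply (connected_of_routes _ route_via_centre). vm_compute. reflexivity. Qed.

Definition G_boundary : list cell :=
  [(0, -1); (1, -1); (2, -1); (2, 0); (3, 0); (3, 1); (3, 2); (2, 2); (2, 3); (1, 3); (0, 3);
   (0, 2); (-1, 2); (-1, 1); (-1, 0); (0, 0)].

Lemma G_has_boundary : external_boundary G_cells G_boundary.
Proof. apply external_boundaryb_sound. vm_compute. reflexivity. Qed.

Lemma G_every_boundary_crosses vs : external_boundary G_cells vs ->
  cond_ii G_cells vs ca1 ca2 cb1 cb2 /\ cond_iii G_cells vs ca1 ca2 cb1 cb2.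
Proof.
  apply (boundary_crossing_test_sound _ _ _ _ _ 15). vm_compute. reflexivity.
Qed.

Lemma G_crosses {St : Type} (bl : St) : crosses (G_CAS bl) ca1 cb1 ca2 cb2.
Proof.
  split; [exists 5%nat; apply G_channel1|]. split; [exists 5%nat; apply G_channel2|].
  split; [apply nodupb_spec; vm_compute; reflexivity|].
  split; [simpl; auto|]. split; [simpl; auto|].
  split; [exact G_connected|]. split; [exists G_boundary; exact G_has_boundary|].
  exact G_every_boundary_crosses.
Qed.

Close Scope Z_scope.

Theorem mainTheorem2 (S : Type) (HSfin : exists l : list S, forall x : S, In x l) (bl : S) :
  is_4CAS (G_CAS bl) /\
  channel (G_CAS bl) ca1 cb1 5 /\
  channel (G_CAS bl) ca2 cb2 5 /\
  crosses (G_CAS bl) ca1 cb1 ca2 cb2 /\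
  Nat.max 5 5 = 5%nat /\ ((5 + 5) / 2 = 5)%nat /\
  length (cells (G_CAS bl)) = 12%nat.
Proof.
  split; [apply G_is_4CAS|].
  split; [apply G_channel1|].
  split; [apply G_channel2|].
  split; [apply G_crosses|].
  repeat split.
Qed.
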